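(* Let $(F,H)$ be the unique local solution on its maximal interval $[0,T_{\max})$ of the Riccati system in the context, let $\Phi_F$ solve $$\Phi_F'(\tau)=(I_{N-1}\otimes\Lambda^{-1/2})F^\top(\tau)(I_{N-1}\otimes\Lambda^{-1/2})\Phi_F(\tau),\qquad\Phi_F(0)=I_{K(N-1)},$$ and define $\Psi_F(r;\tau)=\Phi_F(r)\Phi_F^{-1}(\tau)$ for $r,\tau\in[0,T_{\max})$. Then $\|\Psi_F(r;\tau)\|_{\mathrm{op}}\le1$ for every $0\le r\le\tau<T_{\max}$.
   Context: Riccati system: $F'=\Gamma\otimes(\alpha+(c\otimes I_K)^\top H)(\alpha+(c\otimes I_K)^\top H)^\top-F(I_{N-1}\otimes\Lambda^{-1})F$, $F(0)=0$; $H'=(\Gamma\otimes(\alpha+(c\otimes I_K)^\top H))\xi-F(I_{N-1}\otimes\Lambda^{-1})H$, $H(0)=0$. Here $N\ge2$, $K\le D$; $\gamma^1,\dots,\gamma^N>0$, $\gamma^N=\max_n\gamma^n$, $\bar\gamma=(\sum_n1/\gamma^n)^{-1}$; $c_n=\bar\gamma(1/\gamma^n-1/\gamma^N)$; $\Gamma:=\mathrm{diag}\{\gamma^1,\dots,\gamma^{N-1}\}-\tfrac1N\mathbb 1_{N-1}\mathbb 1_{N-1}^\top\mathrm{diag}\{\gamma^1-\gamma^N,\dots,\gamma^{N-1}-\gamma^N\}$; $\Lambda\in\mathbb R^{K\times K}$ symmetric positive definite with symmetric positive definite square root $\Lambda^{1/2}$; $\alpha\in\mathbb R^{K\times D}$;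 $\xi\in\mathbb R^{(N-1)D\times D}$. $\|\cdot\|_{\mathrm{op}}$ is the operator norm. *)

From HB Require Import structures.
From mathcomp Require Import all_boot all_order all_algebra.
From mathcomp Require Import all_classical all_reals all_analysis.
From mathcomp Require Export mxtens.
Set Implicit Arguments. Unset Strict Implicit. Unset Printing Implicit Defensive.
Import Order.TTheory GRing.Theory Num.Theory.
Import numFieldNormedType.Exports.
Local Open Scope ring_scope.
Local Open Scope classical_set_scope.

Section Defs.
Variable R : realType.

(* Indices of gamma are 1..N (gamma : nat -> R). *)

Definition gbar (N : nat) (g : nat -> R) : R :=
  (\sum_(1 <= n < N.+1) (g n)^-1)^-1.

Definition cvec (N : nat) (g : nat -> R) : 'cV[R]_(N.-1) :=
  \col_(i < N.-1) (gbar N g * ((g i.+1)^-1 - (g N)^-1)).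

(* Gamma = diag{g^1..g^{N-1}} - 1/N 1 1^T diag{g^1-g^N,..,g^{N-1}-g^N} *)
Definition Gam (N : nat) (g : nat -> R) : 'M[R]_(N.-1) :=
  \matrix_(i, j) ((i == j)%:R * g i.+1 - (N%:R)^-1 * (g j.+1 - g N)).

(* c (x) I_K, an (N-1)K x K matrix (1*K cast to K) *)
Definition cI (N K : nat) (g : nat -> R) : 'M[R]_(N.-1 * K, K) :=
  castmx (erefl, mul1n K) (cvec N g *t (1%:M : 'M[R]_K)).

Definition Aterm (N K D : nat) (g : nat -> R) (alpha : 'M[R]_(K, D))
  (H : 'M[R]_(N.-1 * K, D)) : 'M[R]_(K, D) :=
  alpha + (cI N K g)^T *m H.

Definition F_rhs (N K D : nat) (g : nat -> R) (Lam : 'M[R]_K)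
  (alpha : 'M[R]_(K, D)) (F : 'M[R]_(N.-1 * K)) (H : 'M[R]_(N.-1 * K, D))
  : 'M[R]_(N.-1 * K) :=
  Gam N g *t (Aterm g alpha H *m (Aterm g alpha H)^T)
  - F *m ((1%:M : 'M[R]_(N.-1)) *t invmx Lam) *m F.

Definition H_rhs (N K D : nat) (g : nat -> R) (Lam : 'M[R]_K)
  (alpha : 'M[R]_(K, D)) (xi : 'M[R]_(N.-1 * D, D))
  (F : 'M[R]_(N.-1 * K)) (H : 'M[R]_(N.-1 * K, D)) : 'M[R]_(N.-1 * K, D) :=
  (Gam N g *t Aterm g alpha H) *m xi
  - F *m ((1%:M : 'M[R]_(N.-1)) *t invmx Lam) *m H.

Definition Ivl (T : \bar R) : set R := [set t | 0 <= t /\ (t%:E < T)%E].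

Definition ode_sol {V : normedModType R} (T : \bar R) (f : R -> V -> V)
  (X0 : V) (X : R -> V) : Prop :=
  X 0 = X0 /\ {within Ivl T, continuous X} /\
  forall t, 0 < t -> (t%:E < T)%E -> is_derive t (1 : R) X (f t (X t)).

Definition riccati_sol (N K D : nat) (g : nat -> R) (Lam : 'M[R]_K)
  (alpha : 'M[R]_(K, D)) (xi : 'M[R]_(N.-1 * D, D)) (T : \bar R)
  (F : R -> 'M[R]_(N.-1 * K)) (H : R -> 'M[R]_(N.-1 * K, D)) : Prop :=
  ode_sol T (fun _ (FH : 'M[R]_(N.-1 * K) * 'M[R]_(N.-1 * K, D)) =>
               (F_rhs g Lam alpha FH.1 FH.2, H_rhs g Lam alpha xi FH.1 FH.2))
          (0, 0) (fun t => (F t, H t)).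

Definition spd (n : nat) (A : 'M[R]_n) : Prop :=
  A^T = A /\ forall x : 'cV[R]_n, x != 0 -> 0 < (x^T *m A *m x) 0 0.

Definition enorm (n : nat) (x : 'cV[R]_n) : R := Num.sqrt (\sum_i x i 0 ^+ 2).

Definition opnorm (m n : nat) (A : 'M[R]_(m, n)) : R :=
  sup [set enorm (A *m x) | x in [set x : 'cV[R]_n | enorm x <= 1]].

End Defs.

(* Put B = I (x) Lam^(-1/2) and, for a fixed x, y(s) = Phi(s) x and u(s) = B y(s).
   Then d/ds |y|^2 = 2 u^T F u, while along the Riccati flow
   d/ds (u^T F u) = u^T (Gamma (x) A A^T) u + |B F^T u|^2 with A = alpha + (c (x) I)^T H.
   Gamma is positive semidefinite, so this is >= 0, and F(0) = 0 gives u^T F u >= 0.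
   Hence |Phi(s) x| is nondecreasing on [0, Tmax): Phi(tau) is injective, thus invertible,
   and |Phi(r) Phi(tau)^-1 z| <= |Phi(tau) Phi(tau)^-1 z| = |z| for r <= tau. *)

From mathcomp Require Import all_boot all_order all_algebra.
From mathcomp Require Import all_classical all_reals all_analysis.
From mathcomp Require Import mxtens.
From mathcomp Require Import zify ring lra.
Import Order.TTheory GRing.Theory Num.Theory.
Import numFieldNormedType.Exports.
Local Open Scope ring_scope.
Local Open Scope classical_set_scope.

Section QformAlgebra.
Context {R : comRingType} {n : nat}.
Implicit Types (A B F P : 'M[R]_n) (v : 'cV[R]_n).

Lemma qform_trmx A v : (v^T *m A^T *m v) 0 0 = (v^T *m A *m v) 0 0.
Proof.
have <- : (v^T *m A^T *m v)^T = v^T *m A *m v by rewrite !trmx_mul !trmxK mulmxA.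
by rewrite [RHS]mxE.
Qed.

Lemma qform_addtr A v :
  ((A *m v)^T *m v + v^T *m (A *m v)) 0 0 = (v^T *m A *m v) 0 0 *+ 2.
Proof. by rewrite trmx_mul mxE mulmxA qform_trmx. Qed.

Lemma riccati_qform_deriv B F P v : B^T = B ->
  ((B *m B *m F^T *m v)^T *m F + v^T *m (P - F *m (B *m B) *m F)) *m v
    + v^T *m F *m (B *m B *m F^T *m v)
  = v^T *m P *m v + (B *m F^T *m v)^T *m (B *m F^T *m v).
Proof.
move=> B_sym.
have -> : (B *m F^T *m v)^T *m (B *m F^T *m v) = v^T *m F *m (B *m B) *m F^T *m v.
  by rewrite !trmx_mul trmxK B_sym !mulmxA.
rewrite !trmx_mul trmxK B_sym mulmxBr mulmxDl mulmxBl !mulmxA.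
by rewrite [_ + (_ - _)]addrC subrK.
Qed.
End QformAlgebra.

Lemma invmxM {R : comUnitRingType} {n} (A B : 'M[R]_n) :
  A \in unitmx -> B \in unitmx -> invmx (A *m B) = invmx B *m invmx A.
Proof.
move=> A_unit B_unit; have AB_unit : A *m B \in unitmx by rewrite unitmx_mul A_unit.
by rewrite -[RHS]mul1mx -(mulVmx AB_unit) -!mulmxA (mulKVmx B_unit) (mulmxV A_unit) mulmx1.
Qed.

Section PsdMatrices.
Context {R : realFieldType}.

Definition psd {n} (A : 'M[R]_n) : Prop :=
  forall v : 'cV[R]_n, 0 <= (v^T *m A *m v) 0 0.

Lemma qformE {n} (v : 'cV[R]_n) (A : 'M[R]_n) :
  (v^T *m A *m v) 0 0 = \sum_q (\sum_p v p 0 * A p q) * v q 0.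
Proof.
rewrite mxE; apply: eq_bigr => q _; rewrite mxE; congr (_ * _).
by apply: eq_bigr => p _; rewrite mxE.
Qed.

Lemma sqnormE {n} (v : 'cV[R]_n) : (v^T *m v) 0 0 = \sum_i v i 0 ^+ 2.
Proof. by rewrite mxE; apply: eq_bigr => i _; rewrite mxE expr2. Qed.

Lemma sqnorm_ge0 {n} (v : 'cV[R]_n) : 0 <= (v^T *m v) 0 0.
Proof. by rewrite sqnormE; apply: sumr_ge0 => i _; exact: sqr_ge0. Qed.

Lemma sqnorm_le0 {n} (v : 'cV[R]_n) : (v^T *m v) 0 0 <= 0 -> v = 0.
Proof.
rewrite sqnormE => v_le0; apply/matrixP => i j; rewrite [j]ord1 mxE.
apply/eqP; rewrite -sqrf_eq0 eq_le sqr_ge0 andbT (le_trans _ v_le0) //.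
by rewrite (bigD1 i) //= lerDl sumr_ge0 // => k _; exact: sqr_ge0.
Qed.

Lemma psd_congr {m n} (C : 'M[R]_(m, n)) (A : 'M[R]_n) :
  psd A -> psd (C *m A *m C^T).
Proof.
move=> A_psd v; have := A_psd (C^T *m v).
by rewrite trmx_mul trmxK !mulmxA.
Qed.

Lemma sum_mxtens_index {m n} (f : 'I_(m * n) -> R) :
  \sum_p f p = \sum_(i < m) \sum_(j < n) f (mxtens_index (i, j)).
Proof.
rewrite pair_big /= (reindex (@mxtens_unindex m n)) /=.
  by apply: eq_bigr => p _; rewrite mxtens_unindexK.
by exists (@mxtens_index m n) => p _; rewrite (mxtens_indexK, mxtens_unindexK).
Qed.

Lemma psd_tens1 {m n} (A : 'M[R]_m) : psd A -> psd (A *t (1%:M : 'M[R]_n)).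
Proof.
move=> A_psd v; rewrite qformE sum_mxtens_index exchange_big /=.
apply: sumr_ge0 => j _; set w := \col_i v (mxtens_index (i, j)) 0.
rewrite (_ : \sum_(i < m) _ = (w^T *m A *m w) 0 0) // qformE.
apply: eq_bigr => i _; rewrite !mxE sum_mxtens_index; congr (_ * _).
apply: eq_bigr => k _; rewrite mxE.
under eq_bigr do rewrite tensmxE !mxE.
rewrite (bigD1 j) //= eqxx mulr1n mulr1 big1 ?addr0 // => l /negbTE ->.
by rewrite mulr0n !mulr0.
Qed.

Lemma psd_tens_gram {m k d} (A : 'M[R]_m) (a : 'M[R]_(k, d)) :
  psd A -> psd (A *t (a *m a^T)).
Proof.
move=> A_psd; have -> : A *t (a *m a^T) =
    ((1%:M : 'M[R]_m) *t a) *m (A *t (1%:M : 'M[R]_d)) *m ((1%:M : 'M[R]_m) *t a)^T.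
  by rewrite trmx_tens trmx1 !tensmx_mul mul1mx !mulmx1.
exact/psd_congr/psd_tens1.
Qed.

Lemma ker0_unitmx {n} (A : 'M[R]_n) :
  (forall v : 'cV[R]_n, A *m v = 0 -> v = 0) -> A \in unitmx.
Proof.
move=> A_inj; rewrite -unitmx_tr -row_free_unit; apply: inj_row_free => v vA0.
apply: trmx_inj; rewrite trmx0; apply: A_inj.
by rewrite -[A]trmxK -trmx_mul vA0 trmx0.
Qed.
End PsdMatrices.

Section Gamma.
Context {R : realType}.
Variables (N : nat) (g : nat -> R).

Lemma qform_Gam (v : 'cV[R]_N.-1) :
  (v^T *m Gam N g *m v) 0 0 = \sum_(i < N.-1) g i.+1 * v i 0 ^+ 2
    - N%:R^-1 * (\sum_i v i 0) * \sum_(i < N.-1) (g i.+1 - g N) * v i 0.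
Proof.
set s := \sum_i v i 0.
have col_v q : \sum_p v p 0 * Gam N g p q = g q.+1 * v q 0 - N%:R^-1 * s * (g q.+1 - g N).
  under eq_bigr do rewrite mxE mulrBr.
  rewrite sumrB (bigD1 q) //= eqxx mul1r big1 ?addr0; last first.
    by move=> p /negbTE ->; rewrite mul0r mulr0.
  rewrite mulr_sumr mulr_suml; congr (_ - _); first ring.
  by apply: eq_bigr => p _; ring.
rewrite qformE; under eq_bigr do rewrite col_v mulrBl.
by rewrite sumrB [X in _ = _ - X]mulr_sumr; congr (_ - _); apply: eq_bigr => i _; ring.
Qed.

Hypotheses (N_ge2 : (2 <= N)%N) (g_gt0 : forall n, (1 <= n <= N)%N -> 0 < g n)
  (g_le : forall n, (1 <= n <= N)%N -> g n <= g N).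

Lemma psd_Gam : psd (Gam N g).
Proof.
move=> v; rewrite qform_Gam.
set s := \sum_i v i 0; set Q := \sum_i _; set S := \sum_(i < N.-1) g i.+1.
set L := \sum_(i < N.-1) g i.+1 * v i 0.
have N_gt0 : (0 : R) < N%:R by rewrite ltr0n (leq_trans _ N_ge2).
have g_ge0 (i : 'I_N.-1) : 0 <= g i.+1.
  by apply/ltW/g_gt0; have := ltn_ord i; lia.
have gN_ge0 : 0 <= g N by apply/ltW/g_gt0; lia.
have -> : \sum_(i < N.-1) (g i.+1 - g N) * v i 0 = L - g N * s.
  by rewrite mulr_sumr -sumrB; apply: eq_bigr => i _; ring.
(* complete the square around [c := s / 2N] in every coordinate *)
pose c := s / (2 * N%:R).
have sq_c : \sum_(i < N.-1) g i.+1 * (v i 0 - c) ^+ 2 = Q - 2 * c * L + c ^+ 2 * S.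
  rewrite /Q /L /S !mulr_sumr -sumrB -big_split /=.
  by apply: eq_bigr => i _; ring.
have -> : Q - N%:R^-1 * s * (L - g N * s) = \sum_(i < N.-1) g i.+1 * (v i 0 - c) ^+ 2
    + s ^+ 2 / (4 * N%:R ^+ 2) * (4 * N%:R * g N - S).
  by rewrite sq_c /c; field; rewrite gt_eqF.
apply: addr_ge0; first by apply: sumr_ge0 => i _; rewrite mulr_ge0 ?sqr_ge0.
apply: mulr_ge0; first by rewrite divr_ge0 ?sqr_ge0 // mulr_ge0 // exprn_ge0 // ltW.
rewrite subr_ge0.
have S_le : S <= N.-1%:R * g N.
  rewrite -[in X in _ <= X](card_ord N.-1) mulr_natl -sumr_const.
  by apply: ler_sum => i _; rewrite g_le //; have := ltn_ord i; lia.
have : N.-1%:R <= 4 * N%:R :> R by rewrite -natrM ler_nat; lia.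
nra.
Qed.
End Gamma.

Section Norms.
Context {R : realType}.

Lemma enormE {n} (v : 'cV[R]_n) : enorm v = Num.sqrt ((v^T *m v) 0 0).
Proof. by rewrite sqnormE. Qed.

Lemma enorm0 {n} : enorm (0 : 'cV[R]_n) = 0.
Proof. by rewrite enormE trmx0 mul0mx mxE sqrtr0. Qed.

Lemma enorm_le0 {n} (v : 'cV[R]_n) : enorm v <= 0 -> v = 0.
Proof.
rewrite enormE => v_le0; apply: sqnorm_le0.
by rewrite -sqrtr_eq0 eq_le v_le0 sqrtr_ge0.
Qed.

Lemma enorm_ge_unitmx {n} (A : 'M[R]_n) :
  (forall v, enorm v <= enorm (A *m v)) -> A \in unitmx.
Proof.
move=> A_ge; apply: ker0_unitmx => v Av0; apply: enorm_le0.
by have := A_ge v; rewrite Av0 enorm0.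
Qed.

Lemma opnorm_le1 {m n} (A : 'M[R]_(m, n)) :
  (forall v, enorm (A *m v) <= enorm v) -> opnorm A <= 1.
Proof.
move=> A_le; apply: ge_sup.
  exists (enorm (A *m 0)), 0 => //=.
  by rewrite enorm0 ler01.
by move=> _ [v v_le1 <-]; exact: le_trans (A_le v) v_le1.
Qed.

Lemma spd_unitmx {n} {A : 'M[R]_n} : spd A -> A \in unitmx.
Proof.
move=> [_ A_pos]; apply: ker0_unitmx => v Av0; apply/eqP; apply: contraT.
by move/A_pos; rewrite -mulmxA Av0 mulmx0 mxE ltxx.
Qed.
End Norms.

Section LinearImage.
Context {R : numFieldType} {U V W : normedModType R}.

Lemma is_derive_linear (L : {linear V -> W}) {X : U -> V} {t v : U} {dX} :
  continuous L -> is_derive t v X dX -> is_derive t v (L \o X) (L dX).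
Proof.
move=> L_cont [X_der <-].
have L_quot : (fun h : R => h^-1 *: ((L \o X) (h *: v + t) - (L \o X) t))
    = L \o (fun h : R => h^-1 *: (X (h *: v + t) - X t)).
  by apply/funext => h /=; rewrite linearZZ (linearB L).
have L_cvg : (fun h : R => h^-1 *: ((L \o X) (h *: v + t) - (L \o X) t)) @ 0^'
    --> L ('D_v X t).
  by rewrite L_quot; apply: continuous_cvg; [exact: L_cont | exact: X_der].
by apply: DeriveDef; [exact: (cvgP _ L_cvg) | exact: cvg_lim L_cvg].
Qed.

Lemma within_continuous_fst {A : set U} {X : U -> V} {Y : U -> W} :
  {within A, continuous (fun s => (X s, Y s))} -> {within A, continuous X}.
Proof.
move=> XY_cont x.
exact: (continuous_comp (XY_cont x) (@cvg_fst _ _ _ _ _)).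
Qed.
End LinearImage.

Lemma is_derive_fst {R : numFieldType} {U V W : normedModType R}
    {X : U -> V} {Y : U -> W} {t v : U} {dX dY} :
  is_derive t v (fun s => (X s, Y s)) (dX, dY) -> is_derive t v X dX.
Proof.
move=> XY_der; have := is_derive_linear fst _ XY_der.
by apply => p; exact: cvg_fst.
Qed.

Section EntrywiseCalculus.
Context {R : realFieldType}.

Definition entry_continuous (A : set R) {m n} (X : R -> 'M[R]_(m, n)) :=
  forall i j, {within A, continuous (fun s => X s i j)}.

Definition entry_derive {m n} (t : R) (X : R -> 'M[R]_(m, n)) (dX : 'M[R]_(m, n)) :=
  forall i j, is_derive t (1 : R) (fun s => X s i j) (dX i j).

Lemma within_continuous_entry {A : set R} {m n} {X : R -> 'M[R]_(m, n)} :
  {within A, continuous X} -> entry_continuous A X.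
Proof.
move=> X_cont i j x.
exact: (continuous_comp (X_cont x) (@coord_continuous R m n i j (X x))).
Qed.

Lemma entry_continuous_cst {A : set R} {m n} (C : 'M[R]_(m, n)) :
  entry_continuous A (fun _ => C).
Proof. by move=> i j x; exact: cst_continuous. Qed.

Lemma entry_continuous_mul {A : set R} {m n p} {X : R -> 'M[R]_(m, n)} {Y : R -> 'M[R]_(n, p)} :
  entry_continuous A X -> entry_continuous A Y ->
  entry_continuous A (fun s => X s *m Y s).
Proof.
move=> X_cont Y_cont i j x.
have -> : (fun s => (X s *m Y s) i j) = \sum_k ((fun s => X s i k) \* (fun s => Y s k j)).
  by apply/funext => s; rewrite fct_sumE mxE.
apply: (@big_ind _ (fun h : subspace A -> R => {for x, continuous h})).
- exact: cst_continuous.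
- by move=> f h f_cont h_cont; exact: continuousD.
- by move=> k _; apply: continuousM; [exact: X_cont | exact: Y_cont].
Qed.

Lemma entry_continuous_tr {A : set R} {m n} {X : R -> 'M[R]_(m, n)} :
  entry_continuous A X -> entry_continuous A (fun s => (X s)^T).
Proof.
move=> X_cont i j.
by rewrite (_ : (fun s => _) = fun s => X s j i) //; apply/funext => s; rewrite mxE.
Qed.

Lemma is_derive_entry {m n} {t : R} {X : R -> 'M[R]_(m, n)} {dX} :
  is_derive t 1 X dX -> entry_derive t X dX.
Proof.
move=> [X_der <-] i j; rewrite derive_mx // mxE.
exact/derivableP/(derivable_mxP _ _ _).1.
Qed.

Lemma entry_derive_cst {m n} (t : R) (C : 'M[R]_(m, n)) : entry_derive t (fun _ => C) 0.
Proof. by move=> i j; rewrite mxE; exact: is_derive_cst. Qed.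

Lemma entry_derive_mul {m n p} {t : R} {X : R -> 'M[R]_(m, n)} {Y : R -> 'M[R]_(n, p)} {dX dY} :
  entry_derive t X dX -> entry_derive t Y dY ->
  entry_derive t (fun s => X s *m Y s) (dX *m Y t + X t *m dY).
Proof.
move=> X_der Y_der i j.
have -> : (fun s => (X s *m Y s) i j) = \sum_k ((fun s => X s i k) * (fun s => Y s k j)).
  by apply/funext => s; rewrite fct_sumE mxE.
apply: is_derive_eq.
  by apply: is_derive_sum => k; apply: is_deriveM; [exact: X_der | exact: Y_der].
rewrite !mxE -big_split /=; apply: eq_bigr => k _ /=.
by rewrite addrC [_ *: dX i k]mulrC.
Qed.

Lemma entry_derive_tr {m n} {t : R} {X : R -> 'M[R]_(m, n)} {dX} :
  entry_derive t X dX -> entry_derive t (fun s => (X s)^T) dX^T.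
Proof.
move=> X_der i j; rewrite mxE.
by rewrite (_ : (fun s => _) = fun s => X s j i) //; apply/funext => s; rewrite mxE.
Qed.

End EntrywiseCalculus.

Lemma ger0_derive_Ivl_le {R : realType} {T : \bar R} {f df : R -> R} :
  {within Ivl T, continuous f} ->
  (forall t, 0 < t -> (t%:E < T)%E -> is_derive t 1 f (df t)) ->
  (forall t, 0 < t -> (t%:E < T)%E -> 0 <= df t) ->
  forall a b, 0 <= a -> a <= b -> (b%:E < T)%E -> f a <= f b.
Proof.
move=> f_cont f_der df_ge0 a b a_ge0 ab bT.
have f_der_ge0 t : t \in `]a, b[%R -> is_derive t 1 f (df t) /\ 0 <= df t.
  rewrite in_itv /= => /andP[a_lt_t t_lt_b].
  have t_gt0 : 0 < t := le_lt_trans a_ge0 a_lt_t.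
  have tT : (t%:E < T)%E by apply: le_lt_trans bT; rewrite lee_fin ltW.
  by split; [exact: f_der | exact: df_ge0].
apply: (@ger0_derive1_le_cc _ f a b); rewrite ?in_itv /= ?lexx ?ab //.
- by move=> t /f_der_ge0[[]].
- by move=> t /f_der_ge0[[_ Df] ?]; rewrite derive1E Df.
- apply: continuous_subspaceW f_cont => t /=; rewrite in_itv /= => /andP[a_le_t t_le_b].
  by split; [exact: le_trans a_le_t | apply: le_lt_trans bT; rewrite lee_fin].
Qed.

Section RiccatiFlow.
Context {R : realType} {n : nat}.
Context {T : \bar R} {B : 'M[R]_n} {P F Phi : R -> 'M[R]_n}.
Hypotheses (B_sym : B^T = B) (P_psd : forall t, psd (P t)) (F0 : F 0 = 0)
  (F_cont : {within Ivl T, continuous F})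
  (F_der : forall t, 0 < t -> (t%:E < T)%E ->
     is_derive t 1 F (P t - F t *m (B *m B) *m F t))
  (Phi_cont : {within Ivl T, continuous Phi})
  (Phi_der : forall t, 0 < t -> (t%:E < T)%E ->
     is_derive t 1 Phi (B *m (F t)^T *m B *m Phi t)).
Variable x : 'cV[R]_n.

Let y s := Phi s *m x.
Let u s := B *m y s.

Let y_cont : entry_continuous (Ivl T) y.
Proof. exact/entry_continuous_mul/entry_continuous_cst/within_continuous_entry. Qed.

Let u_cont : entry_continuous (Ivl T) u.
Proof. exact/entry_continuous_mul/y_cont/entry_continuous_cst. Qed.

Let y_der t : 0 < t -> (t%:E < T)%E -> entry_derive t y (B *m (F t)^T *m u t).
Proof.
move=> t_gt0 tT; have := entry_derive_mul (is_derive_entry (Phi_der t t_gt0 tT))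
  (entry_derive_cst t x).
by rewrite mulmx0 addr0 /u /y !mulmxA.
Qed.

Let u_der t : 0 < t -> (t%:E < T)%E -> entry_derive t u (B *m B *m (F t)^T *m u t).
Proof.
move=> t_gt0 tT; have := entry_derive_mul (entry_derive_cst t B) (y_der t t_gt0 tT).
by rewrite mul0mx add0r !mulmxA.
Qed.

Lemma qform_flow_ge0 t : 0 <= t -> (t%:E < T)%E -> 0 <= ((u t)^T *m F t *m u t) 0 0.
Proof.
move=> t_ge0 tT.
have -> : 0 = ((u 0)^T *m F 0 *m u 0) 0 0 by rewrite F0 mulmx0 mul0mx mxE.
apply: (ger0_derive_Ivl_le (T := T) (f := fun s => ((u s)^T *m F s *m u s) 0 0)
  (df := fun s => ((u s)^T *m P s *m u s) 0 0
    + ((B *m (F s)^T *m u s)^T *m (B *m (F s)^T *m u s)) 0 0)) => //.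
- exact: (entry_continuous_mul (entry_continuous_mul (entry_continuous_tr u_cont)
    (within_continuous_entry F_cont)) u_cont).
- move=> s s_gt0 sT.
  have := entry_derive_mul (entry_derive_mul (entry_derive_tr (u_der s s_gt0 sT))
    (is_derive_entry (F_der s s_gt0 sT))) (u_der s s_gt0 sT) 0 0.
  by rewrite riccati_qform_deriv // mxE.
- by move=> s _ _; apply: addr_ge0; [exact: P_psd | exact: sqnorm_ge0].
Qed.

Lemma enorm_flow_le a b : 0 <= a -> a <= b -> (b%:E < T)%E ->
  enorm (Phi a *m x) <= enorm (Phi b *m x).
Proof.
move=> a_ge0 ab bT; rewrite !enormE; apply: ler_wsqrtr.
apply: (ger0_derive_Ivl_le (T := T) (f := fun s => ((y s)^T *m y s) 0 0)
  (df := fun s => ((u s)^T *m F s *m u s) 0 0 *+ 2)) => //.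
- exact: (entry_continuous_mul (entry_continuous_tr y_cont) y_cont).
- move=> s s_gt0 sT.
  have -> : ((u s)^T *m F s *m u s) 0 0 = ((y s)^T *m (B *m (F s)^T *m B) *m y s) 0 0.
    by rewrite -[RHS]qform_trmx /u /y !trmx_mul trmxK B_sym !mulmxA.
  rewrite -qform_addtr.
  have := entry_derive_mul (entry_derive_tr (y_der s s_gt0 sT)) (y_der s s_gt0 sT) 0 0.
  by rewrite /u !mulmxA mxE.
- by move=> s s_gt0 sT; rewrite mulrn_wge0 // qform_flow_ge0 // ltW.
Qed.
End RiccatiFlow.

Theorem corollary7p8 (R : realType) (N K D : nat) (g : nat -> R)
  (Lam Lamh : 'M[R]_K) (alpha : 'M[R]_(K, D)) (xi : 'M[R]_(N.-1 * D, D))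
  (Tmax : \bar R) (F : R -> 'M[R]_(N.-1 * K)) (H : R -> 'M[R]_(N.-1 * K, D))
  (Phi : R -> 'M[R]_(N.-1 * K)) :
  (2 <= N)%N -> (K <= D)%N ->
  (forall n, (1 <= n <= N)%N -> 0 < g n) ->
  (forall n, (1 <= n <= N)%N -> g n <= g N) ->
  spd Lam -> spd Lamh -> Lamh *m Lamh = Lam ->
  (0 < Tmax)%E ->
  riccati_sol g Lam alpha xi Tmax F H ->
  (* [0, Tmax) is the maximal interval of existence *)
  (forall (T' : \bar R) (F' : R -> 'M[R]_(N.-1 * K))
          (H' : R -> 'M[R]_(N.-1 * K, D)),
      (Tmax < T')%E -> ~ riccati_sol g Lam alpha xi T' F' H') ->
  ode_sol Tmax
    (fun t (P : 'M[R]_(N.-1 * K)) =>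
       ((1%:M : 'M[R]_(N.-1)) *t invmx Lamh) *m (F t)^T
         *m ((1%:M : 'M[R]_(N.-1)) *t invmx Lamh) *m P)
    1%:M Phi ->
  forall r tau : R, 0 <= r -> r <= tau -> (tau%:E < Tmax)%E ->
    opnorm (Phi r *m invmx (Phi tau)) <= 1.
Proof.
move=> N_ge2 _ g_gt0 g_le _ Lamh_spd LamhE _ [FH0 [FH_cont FH_der]] _ [Phi0 [Phi_cont Phi_der]].
move=> r tau r_ge0 r_le_tau tauT.
set B := (1%:M : 'M[R]_(N.-1)) *t invmx Lamh.
have Lamh_unit := spd_unitmx Lamh_spd.
have B_sym : B^T = B by rewrite /B trmx_tens trmx1 trmx_inv Lamh_spd.1.
have BB : B *m B = (1%:M : 'M[R]_(N.-1)) *t invmx Lam.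
  by rewrite /B tensmx_mul mulmx1 -invmxM // LamhE.
pose P t := Gam N g *t (Aterm g alpha (H t) *m (Aterm g alpha (H t))^T).
have P_psd t : psd (P t) by apply/psd_tens_gram/psd_Gam.
have F0 : F 0 = 0 := congr1 fst FH0.
have F_der t : 0 < t -> (t%:E < Tmax)%E -> is_derive t 1 F (P t - F t *m (B *m B) *m F t).
  by move=> t_gt0 tT; rewrite BB; exact: is_derive_fst (FH_der t t_gt0 tT).
have Phi_le := enorm_flow_le B_sym P_psd F0 (within_continuous_fst FH_cont) F_der
  Phi_cont Phi_der.
have Phi_tau_unit : Phi tau \in unitmx.
  apply: enorm_ge_unitmx => x; rewrite -{1}(mul1mx x) -Phi0.
  by apply: Phi_le => //; exact: le_trans r_le_tau.
apply: opnorm_le1 => z; rewrite -mulmxA -{2}(mulKVmx Phi_tau_unit z).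
exact: Phi_le.
Qed.
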